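(* Let $\Sigma\subseteq\mathbb{C}$ be a finite set, let $b_m\in\Sigma^{\mathbb{Z}}$ for all $m\in\mathbb{N}$, and let $b_m\to b$ pointwise (so $b\in\Sigma^{\mathbb{Z}}$). Assume moreover that for every $N\in\mathbb{N}$, $g(N):=\sup_{m\in\mathbb{N}}\operatorname{gap}(N,b_m)<\infty$. Then for every $N\in\mathbb{N}$ there is $m_0$ such that $\mathcal{W}_N(b_m)\subseteq\mathcal{W}_N(b)$ for all $m\ge m_0$.
   Context: For $u\in\Sigma^{\mathbb{Z}}$ and $N\in\mathbb{N}$, $\mathcal{W}_N(u)$ is the set of words $(u(k),\dots,u(k+N-1))\in\Sigma^N$, $k\in\mathbb{Z}$. For $w\in\mathcal{W}_N(u)$: $\operatorname{pos}(w,u):=\{k\in\mathbb{Z}:(u(k),\dots,u(k+N-1))=w\}$, $\operatorname{gap}(w,u):=\min\{r\in\mathbb{N}:\operatorname{pos}(w,u)+\{-r,\dots,r\}=\mathbb{Z}\}$ (with $\min\emptyset=\infty$), and $\operatorname{gap}(N,u):=\max\{\operatorname{gap}(w,u):w\in\mathcal{W}_N(u)\}$. *)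

From Stdlib Require Import Reals ZArith List Lia.
From Coquelicot Require Import Coquelicot.
Import ListNotations.
Open Scope Z_scope.

Definition word (u : Z -> C) (k : Z) (N : nat) : list C :=
  map (fun i => u (k + Z.of_nat i)) (seq 0 N).

Definition in_words (N : nat) (u : Z -> C) (w : list C) : Prop :=
  exists k : Z, word u k N = w.

Definition in_pos (w : list C) (u : Z -> C) (k : Z) : Prop :=
  word u k (length w) = w.

Definition gap_cover (w : list C) (u : Z -> C) (r : nat) : Prop :=
  forall z : Z, exists k : Z, in_pos w u k /\ Z.abs (z - k) <= Z.of_nat r.

(* gap(w,u) = r  (finite value; gap(w,u) = infinity iff no r satisfies this) *)
Definition is_gap (w : list C) (u : Z -> C) (r : nat) : Prop :=
  gap_cover w u r /\ (forall r', gap_cover w u r' -> (r <= r')%nat).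

Definition gapN_le (N : nat) (u : Z -> C) (G : nat) : Prop :=
  forall w, in_words N u w -> exists r, is_gap w u r /\ (r <= G)%nat.

From Stdlib Require Import Reals ZArith List Lia Classical.
From Coquelicot Require Import Coquelicot.

(* A finite alphabet is discrete, so pointwise convergence of the b_m means that
   each coordinate is eventually constant, and hence so is every finite window.
   A uniform gap bound G for words of length N places an occurrence of each such
   word of b_m within distance G of the origin, i.e. inside one fixed window on
   which b_m eventually coincides with b. *)

Lemma list_isolated_in_ball {K : AbsRing} {V : NormedModule K} (c : V) (L : list V) :
  exists eps : posreal, forall s, In s L -> ball c eps s -> s = c.
Proof.
  induction L as [|a L [e1 H1]].
  - exists (mkposreal 1 Rlt_0_1). intros s [].
  - destruct (classic (a = c)) as [<-|Hac].
    + exists e1. intros s [<-|Hs] Hb; auto.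
    + assert (Hfar : exists e2 : posreal, ~ ball c e2 a).
      { apply not_all_ex_not. intro Hclose. apply Hac. symmetry. exact (eq_close c a Hclose). }
      destruct Hfar as [e2 He2].
      assert (Hpos : (0 < Rmin e1 e2)%R) by (apply Rmin_pos; apply cond_pos).
      exists (mkposreal _ Hpos). simpl. intros s [<-|Hs] Hb.
      * exfalso. apply He2. eapply ball_le; [apply Rmin_r|exact Hb].
      * apply H1; [exact Hs|]. eapply ball_le; [apply Rmin_l|exact Hb].
Qed.

Lemma filterlim_in_list_eventually_eq {T : Type} {F : (T -> Prop) -> Prop} {FF : Filter F}
  {K : AbsRing} {V : NormedModule K} (u : T -> V) (l : V) (L : list V) :
  (forall x, In (u x) L) -> filterlim u F (locally l) -> F (fun x => u x = l).
Proof.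
  intros HL Hlim.
  destruct (list_isolated_in_ball l L) as [eps Heps].
  apply (filter_imp (fun x => ball l eps (u x))).
  - intros x Hx. exact (Heps _ (HL x) Hx).
  - exact (Hlim _ (locally_ball l eps)).
Qed.

Lemma filter_forall_lt {T : Type} {F : (T -> Prop) -> Prop} {FF : Filter F}
  (P : nat -> T -> Prop) (n : nat) :
  (forall i, F (P i)) -> F (fun x => forall i, (i < n)%nat -> P i x).
Proof.
  intro HP. induction n as [|n IH].
  - apply filter_forall. intros x i Hi. lia.
  - apply (filter_imp (fun x => (forall i, (i < n)%nat -> P i x) /\ P n x)).
    + intros x [Hlt Hn] i Hi.
      destruct (Nat.eq_dec i n) as [->|Hne]; [exact Hn | apply Hlt; lia].
    + exact (filter_and _ _ IH (HP n)).
Qed.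

Local Open Scope Z_scope.

Lemma word_length (u : Z -> C) (k : Z) (N : nat) : length (word u k N) = N.
Proof. unfold word. rewrite length_map, length_seq. reflexivity. Qed.

Lemma word_ext (u v : Z -> C) (k : Z) (N : nat) :
  (forall i, (i < N)%nat -> u (k + Z.of_nat i) = v (k + Z.of_nat i)) ->
  word u k N = word v k N.
Proof.
  intro Huv. unfold word. apply map_ext_in.
  intros i Hi. apply in_seq in Hi. apply Huv. lia.
Qed.

Lemma in_words_near_origin (N G : nat) (u : Z -> C) (w : list C) :
  gapN_le N u G -> in_words N u w ->
  exists k : Z, Z.abs k <= Z.of_nat G /\ word u k N = w.
Proof.
  intros HG Hw.
  destruct (HG w Hw) as [r [[Hcover _] Hr]].
  destruct (Hcover 0) as [k [Hk Hkr]].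
  destruct Hw as [k0 <-].
  exists k. unfold in_pos in Hk. rewrite word_length in Hk.
  split; [lia | exact Hk].
Qed.

Theorem proposition4p13
  (Sigma : list C) (b : nat -> Z -> C) (blim : Z -> C)
  (hS : forall (m : nat) (k : Z), In (b m k) Sigma)
  (hconv : forall k : Z,
      filterlim (fun m : nat => b m k) eventually (locally (blim k)))
  (hgap : forall N : nat, exists G : nat, forall m : nat, gapN_le N (b m) G) :
  forall N : nat, exists m0 : nat, forall m : nat, (m0 <= m)%nat ->
    forall w : list C, in_words N (b m) w -> in_words N blim w.
Proof.
  intro N. destruct (hgap N) as [G HG].
  set (window i := - Z.of_nat G + Z.of_nat i).
  assert (Hwindow : eventually (fun m => forall i, (i < 2 * G + N)%nat ->
                                         b m (window i) = blim (window i))).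
  { apply filter_forall_lt. intro i.
    exact (filterlim_in_list_eventually_eq (fun m => b m (window i)) _ Sigma
             (fun m => hS m _) (hconv (window i))). }
  destruct Hwindow as [m0 Hm0].
  exists m0. intros m Hm w Hw.
  destruct (in_words_near_origin N G (b m) w (HG m) Hw) as [k [Hk <-]].
  exists k. symmetry. apply word_ext. intros i Hi.
  replace (k + Z.of_nat i) with (window (Z.to_nat (k + Z.of_nat i + Z.of_nat G)))
    by (unfold window; lia).
  apply Hm0; [exact Hm | lia].
Qed.
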